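(* For any two policy profiles $\pi,\pi'$ and every player $i$, $$\|v_i(\pi)-v_i(\pi')\|\le\frac{3\sqrt{A_i}}{\zeta^3}\sum_{j\in\mathcal N}\sqrt{A_j}\,\|\pi_j-\pi'_j\|,$$ and consequently $\|v(\pi)-v(\pi')\|\le\frac{3A}{\zeta^3}\|\pi-\pi'\|$ with $A=\sum_{i\in\mathcal N}A_i$.
   Context: Standing setting. Finite $N$-player stochastic game with random stopping: players $\mathcal N$, finite states $\mathcal S$, finite action sets $\mathcal A_i$ with $A_i=|\mathcal A_i|$, $\mathcal A=\prod_i\mathcal A_i$, rewards $r_i:\mathcal S\times\mathcal A\to[-1,1]$, nonnegative transition weights $P(s'\mid s,a)$ with stopping probability $\zeta_{s,a}=1-\sum_{s'}P(s'\mid s,a)$, $\zeta=\min_{s,a}\zeta_{s,a}>0$, initial distribution $\rho$. Policies $\pi_i\in\Delta(\mathcal A_i)^{\mathcal S}\subset\mathbb R^{\mathcal S\times\mathcal A_i}$, Euclidean norms. Episodes: $s_0\sim\rho$; players independently draw $a_{i,t}\sim\pi_i(\cdot\mid s_t)$; stop w.p. $\zeta_{s_t,a_t}$ ($T(\tau)=t$), else move to $s'$ w.p. $P(s'\mid s_t,a_t)$. $V_{i,\rho}(\pi)=\mathbb E_\pi[\sum_{t=0}^{T(\tau)}r_i(s_t,a_t)]$, $v_i(\pi)=\nabla_{\pi_i}V_{i,\rho}(\pi)$ (gradient in player $i$'s own entries), $v=(v_i)_i$. *)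

From HB Require Import structures.
From mathcomp Require Import all_boot all_order all_algebra.
From mathcomp Require Import all_classical all_reals all_analysis.
Set Implicit Arguments. Unset Strict Implicit. Unset Printing Implicit Defensive.
Import Order.TTheory GRing.Theory Num.Theory numFieldNormedType.Exports.
Local Open Scope ring_scope.

(* Players: a finite type I.  States: a finite type S.
   Action set of player i: 'I_(Ai i), so A_i = |A_i| = Ai i.
   Joint actions: dependent finite functions. *)
Definition joint (I : finType) (Ai : I -> nat) : finType :=
  {dffun forall i : I, 'I_(Ai i)}.

(* A (policy) profile: for each player i a real vector indexed by S x A_i,
   i.e. pi i s b = pi_i(b | s).  Defined on the whole ambient space. *)
Definition profile (R : realType) (I S : finType) (Ai : I -> nat) :=
  forall i : I, S -> 'I_(Ai i) -> R.

Definition is_policy (R : realType) (I S : finType) (Ai : I -> nat)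
  (pi : profile R S Ai) : Prop :=
  (forall i s b, 0 <= pi i s b) /\ (forall i s, \sum_(b < Ai i) pi i s b = 1).

Definition jprob (R : realType) (I S : finType) (Ai : I -> nat)
  (pi : profile R S Ai) (s : S) (a : joint Ai) : R :=
  \prod_(i : I) pi i s (a i).

(* d_{t+1}(s') = sum_s d_t(s) sum_a pi(a|s) P(s'|s,a): the (sub-probability)
   law of s_{t+1} on the event that the episode has not stopped by time t. *)
Definition dist_step (R : realType) (I S : finType) (Ai : I -> nat)
  (P : S -> joint Ai -> S -> R) (pi : profile R S Ai) (d : S -> R) : S -> R :=
  fun s' => \sum_(s : S) d s * \sum_(a : joint Ai) jprob pi s a * P s a s'.

Definition state_dist (R : realType) (I S : finType) (Ai : I -> nat)
  (rho : S -> R) (P : S -> joint Ai -> S -> R) (pi : profile R S Ai) (t : nat)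
  : S -> R := iter t (dist_step P pi) rho.

(* E_pi[ r(s_t,a_t) 1{T(tau) >= t} ] *)
Definition step_reward (R : realType) (I S : finType) (Ai : I -> nat)
  (r : S -> joint Ai -> R) (rho : S -> R) (P : S -> joint Ai -> S -> R)
  (pi : profile R S Ai) (t : nat) : R :=
  \sum_(s : S) state_dist rho P pi t s * \sum_(a : joint Ai) jprob pi s a * r s a.

(* V_{i,rho}(pi) = E_pi[ sum_{t=0}^{T(tau)} r_i(s_t,a_t) ] = sum_t step_reward *)
Definition value (R : realType) (I S : finType) (Ai : I -> nat)
  (r : S -> joint Ai -> R) (rho : S -> R) (P : S -> joint Ai -> S -> R)
  (pi : profile R S Ai) : R :=
  limn (@series R (step_reward r rho P pi)).

Definition pert (R : realType) (I S : finType) (Ai : I -> nat)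
  (pi : profile R S Ai) (i : I) (s : S) (a : 'I_(Ai i)) (t : R) : profile R S Ai :=
  fun j s' b => pi j s' b + (if [&& j == i, s' == s & val b == val a] then t else 0).

Definition grad (R : realType) (I S : finType) (Ai : I -> nat)
  (r : I -> S -> joint Ai -> R) (rho : S -> R) (P : S -> joint Ai -> S -> R)
  (pi : profile R S Ai) (i : I) : S -> 'I_(Ai i) -> R :=
  fun s a => derive1 (fun t => value (r i) rho P (pert pi s a t)) 0.

Definition enorm (R : realType) (S : finType) (n : nat) (f : S -> 'I_n -> R) : R :=
  Num.sqrt (\sum_(s : S) \sum_(b < n) f s b ^+ 2).

Definition prof_norm (R : realType) (I S : finType) (Ai : I -> nat)
  (f : profile R S Ai) : R :=
  Num.sqrt (\sum_(i : I) \sum_(s : S) \sum_(b < Ai i) f i s b ^+ 2).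

(* zeta = min_{s,a} zeta_{s,a},  zeta_{s,a} = 1 - sum_{s'} P(s'|s,a)
   (the identity 1 of the min is harmless since every zeta_{s,a} <= 1). *)
Definition zeta (R : realType) (I S : finType) (Ai : I -> nat)
  (P : S -> joint Ai -> S -> R) : R :=
  \big[Num.min/1]_(s : S) \big[Num.min/1]_(a : joint Ai) (1 - \sum_(s' : S) P s a s').

Arguments grad {R I S Ai} r rho P pi i _ _.
Arguments enorm {R S n} f.
Arguments prof_norm {R I S Ai} f.

(* The gradient has the closed form v_i(pi)(s, b) = d_pi(s) * Qbar_pi(s, b): d_pi(s) is the
   expected number of visits of s (the occupation measure, a Neumann series of the substochastic
   transition matrix of pi) and Qbar_pi(s, b) is the action value when player i plays b at s and
   everybody follows pi afterwards.  Indeed V(pi + t e_(s,b)) is affine in t up to the change of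
   the occupation measure, which is O(t).
   Every row of a transition matrix has mass at most 1 - zeta, so d_pi has l1 norm at most
   1 / zeta and |Qbar_pi| <= 1 / zeta.  Let X bound sum_j ||pi_j(s) - pi'_j(s)||_1 uniformly in s;
   by Cauchy-Schwarz X = sum_j sqrt(A_j) ||pi_j - pi'_j|| will do.  Joint actions are drawn
   independently, so the joint laws, hence the transition matrices, move by at most X in l1.
   Comparing the fixpoint equations of pi and pi' gives zeta^2 ||d_pi - d_pi'||_1 <= X and
   zeta^2 |Qbar_pi - Qbar_pi'| <= X, hence zeta^3 |v_i(pi)(s, b) - v_i(pi')(s, b)| <= m(s) with
   sum_s m(s) <= 3 X.  Summing squares over s and the A_i actions b gives the first bound, and
   Cauchy-Schwarz over the players the second. *)

From HB Require Import structures.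
From mathcomp Require Import all_boot all_order all_algebra.
From mathcomp Require Import all_classical all_reals all_analysis.
From mathcomp Require Import ring lra.
Import Order.TTheory GRing.Theory Num.Theory numFieldNormedType.Exports.
Local Open Scope ring_scope.

Set Implicit Arguments. Unset Strict Implicit. Unset Printing Implicit Defensive.

Section JointActions.
Variables (I : finType) (Ai : I -> nat).

Lemma sum_joint_prod (R : comNzRingType) (f : forall i : I, 'I_(Ai i) -> R) :
  \sum_(a : joint Ai) \prod_(i : I) f i (a i) = \prod_(i : I) \sum_(c < Ai i) f i c.
Proof.
pose T_ : I -> finType := fun i => 'I_(Ai i).
pose F_ := fun i => [ffun c : T_ i => f i c].
transitivity (\sum_(t : fprod T_) \prod_(i in I) F_ i (t i)).
  rewrite (reindex (@dffun_of_fprod I T_)); last exact/onW_bij/dffun_of_fprod_bij.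
  apply: eq_bigr => t _; apply: eq_bigr => i _.
  by rewrite /dffun_of_fprod !ffunE.
rewrite (big_fprod 1 _ F_).
rewrite -(bigA_distr_big_dep _ (fun i j => untag 0 (F_ i) j)).
apply: eq_bigr => i _.
transitivity (\sum_(c : T_ i) F_ i c); last by apply: eq_bigr => c _; rewrite ffunE.
by rewrite (@big_tag R 0 +%R I T_ (fun i c => F_ i c) i).
Qed.

Variable R : realDomainType.

Lemma sum_norm_prod_update (f g : forall i : I, 'I_(Ai i) -> R) (k : I) :
  (forall i, i != k -> f i = g i) ->
  \sum_(a : joint Ai) `|\prod_i f i (a i) - \prod_i g i (a i)| =
  (\sum_c `|f k c - g k c|) * \prod_(i | i != k) \sum_c `|f i c|.
Proof.
move=> fg; pose h i (c : 'I_(Ai i)) := if i == k then `|f i c - g i c| else `|f i c|.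
transitivity (\sum_(a : joint Ai) \prod_i h i (a i)).
  apply: eq_bigr => a _.
  rewrite (bigD1 k) // [X in _ - X](bigD1 k) //= [RHS](bigD1 k) //= /h eqxx.
  have -> : \prod_(i | i != k) g i (a i) = \prod_(i | i != k) f i (a i).
    by apply: eq_bigr => i ik; rewrite fg.
  rewrite -[X in `|X|]mulrBl normrM normr_prod; congr (_ * _).
  by apply: eq_bigr => i /negbTE ->.
rewrite sum_joint_prod (bigD1 k) //= /h eqxx; congr (_ * _).
by apply: eq_bigr => i /negbTE ->.
Qed.

Lemma sum_norm_prod_sub_le (x y : forall i : I, 'I_(Ai i) -> R) :
  (forall i, \sum_c `|x i c| <= 1) -> (forall i, \sum_c `|y i c| <= 1) ->
  \sum_(a : joint Ai) `|\prod_i x i (a i) - \prod_i y i (a i)| <=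
  \sum_i \sum_c `|x i c - y i c|.
Proof.
move=> hx hy.
pose z (l : seq I) i := if i \in l then x i else y i.
have z_le1 l i : \sum_c `|z l i c| <= 1 by rewrite /z; case: (i \in l).
suff hyb l : \sum_(a : joint Ai) `|\prod_i z l i (a i) - \prod_i y i (a i)| <=
    \sum_(i <- l) \sum_c `|x i c - y i c|.
  have := hyb (index_enum I); congr (_ <= _); apply: eq_bigr => a _.
  by congr `|_ - _|; apply: eq_bigr => i _; rewrite /z mem_index_enum.
elim: l => [|k l IH].
  by rewrite big_nil big1 // => a _; rewrite subrr normr0.
rewrite big_cons.
apply: (@le_trans _ _ (\sum_(a : joint Ai) `|\prod_i z (k :: l) i (a i) - \prod_i z l i (a i)|
    + \sum_(a : joint Ai) `|\prod_i z l i (a i) - \prod_i y i (a i)|)).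
  by rewrite -big_split; apply: ler_sum => a _; apply: ler_distD.
apply: lerD IH.
have zk i : i != k -> z (k :: l) i = z l i.
  by move=> /negbTE ik; rewrite /z in_cons ik.
rewrite (sum_norm_prod_update (k := k)) //.
case kl : (k \in l).
  rewrite big1 ?mul0r ?sumr_ge0 // => c _.
  by rewrite /z in_cons eqxx kl /= subrr normr0.
have -> : z (k :: l) k = x k by rewrite /z in_cons eqxx.
have -> : z l k = y k by rewrite /z kl.
rewrite -[leRHS]mulr1; apply: ler_pM => //.
- by apply: sumr_ge0.
- by apply: prodr_ge0 => i _; apply: sumr_ge0 => c _.
- by apply: prodr_ile1 => i _; rewrite z_le1 andbT; apply: sumr_ge0 => c _.
Qed.

End JointActions.

Section SumInequalities.
Variable R : realDomainType.

Lemma sumr_sqr_le_sqr_sumr (T : finType) (m : T -> R) :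
  (forall t, 0 <= m t) -> \sum_t m t ^+ 2 <= (\sum_t m t) ^+ 2.
Proof.
move=> m0; rewrite expr2 mulr_suml; apply: ler_sum => t _.
by rewrite expr2 ler_wpM2l // (bigD1 t) //= lerDl sumr_ge0.
Qed.

Lemma cauchy_schwarz_sum (T : finType) (a b : T -> R) :
  (\sum_t a t * b t) ^+ 2 <= (\sum_t a t ^+ 2) * (\sum_t b t ^+ 2).
Proof.
have lagrange : \sum_i \sum_j (a i * b j - a j * b i) ^+ 2 =
    2 * ((\sum_t a t ^+ 2) * (\sum_t b t ^+ 2)) - 2 * (\sum_t a t * b t) ^+ 2.
  have sqrA : (\sum_t a t ^+ 2) * (\sum_t b t ^+ 2) = \sum_i \sum_j a i ^+ 2 * b j ^+ 2.
    by rewrite mulr_suml; apply: eq_bigr => i _; rewrite mulr_sumr.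
  have sqrAB : (\sum_t a t * b t) ^+ 2 = \sum_i \sum_j (a i * b i) * (a j * b j).
    by rewrite expr2 mulr_suml; apply: eq_bigr => i _; rewrite mulr_sumr.
  rewrite sqrA sqrAB.
  transitivity (\sum_i \sum_j (a i ^+ 2 * b j ^+ 2 + a j ^+ 2 * b i ^+ 2
     - 2 * ((a i * b i) * (a j * b j)))).
    by apply: eq_bigr => i _; apply: eq_bigr => j _; ring.
  transitivity (\sum_i \sum_j a i ^+ 2 * b j ^+ 2 + \sum_i \sum_j a j ^+ 2 * b i ^+ 2
     - 2 * \sum_i \sum_j (a i * b i) * (a j * b j)).
    rewrite mulr_sumr -big_split /= -sumrB; apply: eq_bigr => i _.
    by rewrite mulr_sumr -big_split /= -sumrB.
  rewrite [X in _ + X - _]exchange_big; ring.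
have : 0 <= \sum_i \sum_j (a i * b j - a j * b i) ^+ 2.
  by apply: sumr_ge0 => i _; apply: sumr_ge0 => j _; apply: sqr_ge0.
rewrite lagrange; lra.
Qed.

Lemma sqr_le_of_norm_le (x y : R) : `|x| <= y -> x ^+ 2 <= y ^+ 2.
Proof.
move=> xy; rewrite -(real_normK (num_real x)) !expr2.
by apply: ler_pM => //; apply: le_trans xy.
Qed.

End SumInequalities.

Section SqrtInequalities.
Variable R : rcfType.

Lemma sum_norm_le_sqrt (n : nat) (v : 'I_n -> R) :
  \sum_c `|v c| <= Num.sqrt n%:R * Num.sqrt (\sum_c v c ^+ 2).
Proof.
have := cauchy_schwarz_sum (fun _ : 'I_n => 1) (fun c => `|v c|).
under eq_bigr do rewrite mul1r.
under [X in _ <= X * _]eq_bigr do rewrite expr1n.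
under [X in _ <= _ * X]eq_bigr do rewrite (real_normK (num_real _)).
rewrite sumr_const card_ord -sqrtrM // => cs.
have v0 : 0 <= \sum_c `|v c| by apply: sumr_ge0.
rewrite -(ger0_norm v0) -sqrtr_sqr ler_sqrt // mulr_ge0 //.
by apply: sumr_ge0 => c _; apply: sqr_ge0.
Qed.

Lemma sqrtr_le (x c : R) : 0 <= c -> x <= c ^+ 2 -> Num.sqrt x <= c.
Proof. by move=> c0 xc; rewrite -(ger0_norm c0) -sqrtr_sqr ler_sqrt ?sqr_ge0. Qed.

End SqrtInequalities.

Section Kernels.
Variables (R : realType) (S : finType).
Implicit Types (K : S -> S -> R) (x d : S -> R).
Local Open Scope classical_set_scope.

Definition kstep K d : S -> R := fun s' => \sum_s d s * K s s'.

Definition ktr K : S -> S -> R := fun s' s => K s s'.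

(* [occupation K x] is the row vector x (1 + K + K^2 + ...); since [kstep (ktr K)] multiplies
   column vectors, [occupation (ktr K) c] is the column vector (1 + K + K^2 + ...) c. *)
Definition occupation K x (s : S) : R := limn (series (fun t => iter t (kstep K) x s)).

Definition geom_bounded K x := exists B q, 0 <= q < 1 /\
  forall t s, `|iter t (kstep K) x s| <= B * q ^+ t.

Lemma cvg_sum_seq (J : Type) (r : seq J) (F : J -> nat -> R) (l : J -> R) :
  (forall j, F j n @[n --> \oo] --> l j) ->
  \sum_(j <- r) F j n @[n --> \oo] --> \sum_(j <- r) l j.
Proof. by move=> cF; apply: cvg_big => //; exact: add_continuous. Qed.

Lemma cvg_series_geometric_bound (u : nat -> R) (B q : R) : 0 <= q < 1 ->
  (forall n, `|u n| <= B * q ^+ n) -> cvgn (series u).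
Proof.
move=> /andP[q0 q1] hu.
have B0 : 0 <= B by have := hu 0%N; rewrite expr0 mulr1; apply: le_trans.
apply: normed_cvg; apply: (@series_le_cvg _ _ (geometric B q)).
- by move=> n /=.
- by move=> n; apply: geometric_ge0.
- exact: hu.
- by apply: is_cvg_geometric_series; rewrite ger0_norm.
Qed.

Lemma occupation_cvg K x : geom_bounded K x ->
  forall s, cvgn (series (fun t => iter t (kstep K) x s)).
Proof. by move=> [B [q [hq hb]]] s; apply: (cvg_series_geometric_bound hq) => n. Qed.

Lemma series_sum_occupation K x (c : S -> R) : geom_bounded K x ->
  (fun n => \sum_s series (fun t => iter t (kstep K) x s) n * c s) @ \oo -->
  \sum_s occupation K x s * c s.
Proof.
move=> /occupation_cvg cv; apply: cvg_sum_seq => s.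
by apply: cvgM; [exact: cv | exact: cvg_cst].
Qed.

Lemma occupation_fixpoint K x : geom_bounded K x ->
  forall s', occupation K x s' = x s' + \sum_s occupation K x s * K s s'.
Proof.
move=> hg s'; rewrite [LHS]/occupation; apply: cvg_lim => //.
rewrite -cvg_shiftS.
have -> : (fun n => series (fun t => iter t (kstep K) x s') n.+1) =
    (fun n => x s' + \sum_s series (fun t => iter t (kstep K) x s) n * K s s').
  apply/funext => n; rewrite /series /= big_nat_recl //=; congr (_ + _).
  by rewrite exchange_big /=; apply: eq_bigr => s _; rewrite big_distrl.
by apply: cvgD; [exact: cvg_cst | exact: series_sum_occupation].
Qed.

Lemma lim_series_occupation K x (c : S -> R) : geom_bounded K x ->
  limn (series (fun t => \sum_s iter t (kstep K) x s * c s)) =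
  \sum_s occupation K x s * c s.
Proof.
move=> hg; apply: cvg_lim => //.
have -> : series (fun t => \sum_s iter t (kstep K) x s * c s) =
    (fun n => \sum_s series (fun t => iter t (kstep K) x s) n * c s).
  apply/funext => n; rewrite /series /= exchange_big /=.
  by apply: eq_bigr => s _; rewrite big_distrl.
exact: series_sum_occupation.
Qed.

Lemma occupation_telescope K x (y : S -> R) : geom_bounded K x ->
  \sum_s occupation K x s * (y s - \sum_s' K s s' * y s') = \sum_s x s * y s.
Proof.
move=> hg.
have occ_y : \sum_s occupation K x s * y s =
    \sum_s x s * y s + \sum_s occupation K x s * \sum_s' K s s' * y s'.
  under eq_bigr do rewrite (occupation_fixpoint hg) mulrDl.
  rewrite big_split /=; congr (_ + _).
  under eq_bigr do rewrite mulr_suml.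
  rewrite exchange_big /=; apply: eq_bigr => s _; rewrite mulr_sumr.
  by apply: eq_bigr => s' _; rewrite mulrA.
under eq_bigr do rewrite mulrBr.
by rewrite sumrB occ_y addrK.
Qed.

Lemma fixpoint_sub (K K' : S -> S -> R) (x x' y y' : S -> R) :
  (forall s', y s' = x s' + \sum_s y s * K s s') ->
  (forall s', y' s' = x' s' + \sum_s y' s * K' s s') ->
  forall s', y s' - y' s' =
    (x s' - x' s' + \sum_s y s * (K s s' - K' s s')) + \sum_s (y s - y' s) * K' s s'.
Proof.
move=> hy hy' s'; rewrite {1}hy {1}hy'.
have -> : \sum_s y s * (K s s' - K' s s') = \sum_s y s * K s s' - \sum_s y s * K' s s'.
  by rewrite -sumrB; apply: eq_bigr => s _; rewrite mulrBr.
have -> : \sum_s (y s - y' s) * K' s s' = \sum_s y s * K' s s' - \sum_s y' s * K' s s'.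
  by rewrite -sumrB; apply: eq_bigr => s _; rewrite mulrBl.
ring.
Qed.

Lemma norm_le_sum_norm (f : S -> R) s : `|f s| <= \sum_s' `|f s'|.
Proof. by rewrite (bigD1 s) //= lerDl sumr_ge0. Qed.

Variable q : R.
Variable K : S -> S -> R.
Hypothesis K_row : forall s, \sum_s' `|K s s'| <= q.

Lemma kstep_l1_le d : \sum_s' `|kstep K d s'| <= q * \sum_s `|d s|.
Proof.
apply: (@le_trans _ _ (\sum_s' \sum_s `|d s| * `|K s s'|)).
  apply: ler_sum => s' _; apply: (le_trans (ler_norm_sum _ _ _)).
  by apply: ler_sum => s _; rewrite normrM.
rewrite exchange_big /= mulr_sumr; apply: ler_sum => s _.
by rewrite -mulr_sumr mulrC ler_wpM2r.
Qed.

Lemma kstep_tr_sup_le u b : 0 <= b -> (forall s, `|u s| <= b) ->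
  forall s, `|kstep (ktr K) u s| <= q * b.
Proof.
move=> b0 hu s; apply: (le_trans (ler_norm_sum _ _ _)).
apply: (@le_trans _ _ (\sum_s' b * `|K s s'|)).
  by apply: ler_sum => s' _; rewrite normrM ler_wpM2r.
by rewrite -mulr_sumr mulrC ler_wpM2r.
Qed.

Lemma fixpoint_l1_le (y z : S -> R) :
  (forall s', y s' = z s' + \sum_s y s * K s s') ->
  (1 - q) * \sum_s `|y s| <= \sum_s `|z s|.
Proof.
move=> hy.
have : \sum_s `|y s| <= \sum_s `|z s| + q * \sum_s `|y s|.
  apply: (@le_trans _ _ (\sum_s `|z s| + \sum_s' `|kstep K y s'|)).
    by rewrite -big_split /=; apply: ler_sum => s _; rewrite hy ler_normD.
  by rewrite lerD2l kstep_l1_le.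
by rewrite mulrBl mul1r; lra.
Qed.

Hypothesis q01 : 0 <= q < 1.

Lemma geom_bounded_row x : geom_bounded K x.
Proof.
exists (\sum_s `|x s|), q; split => // t s.
apply: (le_trans (norm_le_sum_norm _ s)).
elim: t => [|t IH]; first by rewrite expr0 mulr1.
rewrite iterS; apply: (le_trans (kstep_l1_le _)).
by rewrite exprS mulrCA ler_wpM2l //; case/andP: q01.
Qed.

Lemma geom_bounded_tr x : geom_bounded (ktr K) x.
Proof.
have q0 : 0 <= q by case/andP: q01.
exists (\sum_s `|x s|), q; split => // t.
elim: t => [|t IH] s; first by rewrite expr0 mulr1 /=; apply: norm_le_sum_norm.
rewrite iterS exprS mulrCA; apply: kstep_tr_sup_le => //.
by rewrite mulr_ge0 ?exprn_ge0 ?sumr_ge0.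
Qed.

Lemma fixpoint_sup_le (y z : S -> R) b :
  (forall s, y s = z s + \sum_s' y s' * K s s') ->
  (forall s, `|z s| <= b) -> forall s, (1 - q) * `|y s| <= b.
Proof.
move=> hy hz s0.
have b0 : 0 <= b by apply: le_trans (hz s0).
have q0 : 0 <= q by case/andP: q01.
set m := \big[Order.max/0]_s `|y s|.
have y_le_m s : `|y s| <= m by apply: le_bigmax.
have m0 : 0 <= m by apply: le_trans (y_le_m s0).
have : m <= b + q * m.
  apply: bigmax_le => [|s _]; first by rewrite addr_ge0 ?mulr_ge0.
  rewrite hy; apply: (le_trans (ler_normD _ _)); apply: lerD => //.
  exact: (kstep_tr_sup_le m0 y_le_m s).
move=> m_le; apply: (@le_trans _ _ ((1 - q) * m)).
  by rewrite ler_wpM2l ?subr_ge0 //; case/andP: q01 => _ /ltW.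
by rewrite mulrBl mul1r; lra.
Qed.

End Kernels.

Section Game.
Variables (R : realType) (I S : finType) (Ai : I -> nat).
Variable P : S -> joint Ai -> S -> R.
Hypothesis P_ge0 : forall s a s', 0 <= P s a s'.
Implicit Types p : profile R S Ai.

Local Notation zt := (zeta P).

Lemma zeta_le1 : zt <= 1.
Proof. exact: bigmin_le_id. Qed.

Lemma sum_P_le s a : \sum_s' P s a s' <= 1 - zt.
Proof.
have := bigmin_le 1 s (fun s => \big[Num.min/1]_(a : joint Ai) (1 - \sum_s' P s a s')).
have := bigmin_le 1 a (fun a => 1 - \sum_s' P s a s').
rewrite /zeta /=; lra.
Qed.

Definition trans p : S -> S -> R := fun s s' => \sum_(a : joint Ai) jprob p s a * P s a s'.

Definition exp_reward (r : S -> joint Ai -> R) p s : R := \sum_(a : joint Ai) jprob p s a * r s a.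

Lemma value_occupation r rho p : geom_bounded (trans p) rho ->
  value r rho P p = \sum_s occupation (trans p) rho s * exp_reward r p s.
Proof. exact: lim_series_occupation. Qed.

Lemma sum_norm_mix_le (al : joint Ai -> R) s :
  \sum_s' `|\sum_a al a * P s a s'| <= (1 - zt) * \sum_a `|al a|.
Proof.
apply: (@le_trans _ _ (\sum_s' \sum_a `|al a| * P s a s')).
  apply: ler_sum => s' _; apply: (le_trans (ler_norm_sum _ _ _)).
  by apply: ler_sum => a _; rewrite normrM (ger0_norm (P_ge0 _ _ _)).
rewrite exchange_big /= mulr_sumr; apply: ler_sum => a _.
by rewrite -mulr_sumr mulrC ler_wpM2r // sum_P_le.
Qed.

Lemma sum_norm_policy p : is_policy p -> forall i s, \sum_c `|p i s c| = 1.
Proof.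
by case=> p0 p1 i s; rewrite -(p1 i s); apply: eq_bigr => c _; rewrite ger0_norm.
Qed.

Lemma sum_norm_jprob p : is_policy p -> forall s, \sum_a `|jprob p s a| = 1.
Proof.
move=> hp s; under eq_bigr do rewrite normr_prod.
rewrite (sum_joint_prod (fun i c => `|p i s c|)) big1 // => i _.
exact: sum_norm_policy.
Qed.

Lemma trans_row_le p : is_policy p -> forall s, \sum_s' `|trans p s s'| <= 1 - zt.
Proof. by move=> hp s; apply: le_trans (sum_norm_mix_le _ _) _; rewrite sum_norm_jprob ?mulr1. Qed.

Definition dev_profile p {i0 : I} (b : 'I_(Ai i0)) (s : S) : forall i, 'I_(Ai i) -> R :=
  fun i c => if i == i0 then (val c == val b)%:R else p i s c.
Arguments dev_profile p {i0} b s i c.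

Definition dev_prob p {i0 : I} (b : 'I_(Ai i0)) (s : S) (a : joint Ai) : R :=
  \prod_i dev_profile p b s i (a i).

Definition dev_trans p {i0 : I} (b : 'I_(Ai i0)) (s s' : S) : R :=
  \sum_a dev_prob p b s a * P s a s'.

Lemma sum_norm_dev_profile p (hp : is_policy p) i0 (b : 'I_(Ai i0)) s i :
  \sum_c `|dev_profile p b s i c| = 1.
Proof.
rewrite /dev_profile; case: eqP => [->|_].
  rewrite (bigD1 b) //= eqxx normr1 big1 ?addr0 // => c.
  by rewrite -val_eqE => /negbTE ->; rewrite normr0.
exact: sum_norm_policy.
Qed.

Lemma sum_norm_dev_prob p (hp : is_policy p) i0 (b : 'I_(Ai i0)) s :
  \sum_a `|dev_prob p b s a| = 1.
Proof.
under eq_bigr do rewrite normr_prod.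
by rewrite (sum_joint_prod (fun i c => `|dev_profile p b s i c|)) big1 // => i _;
  apply: sum_norm_dev_profile.
Qed.

Lemma jprob_pert p i0 (s0 : S) (b : 'I_(Ai i0)) t s a :
  jprob (pert p s0 b t) s a = jprob p s a + t * ((s == s0)%:R * dev_prob p b s a).
Proof.
rewrite /jprob /dev_prob (bigD1 i0) // [\prod_i p i s _](bigD1 i0) //.
rewrite [\prod_i dev_profile _ _ _ _ _](bigD1 i0) //=.
have -> : \prod_(j | j != i0) pert p s0 b t s (a j) = \prod_(j | j != i0) p j s (a j).
  by apply: eq_bigr => j /negbTE hj; rewrite /pert hj /= addr0.
have -> : \prod_(j | j != i0) dev_profile p b s j (a j) = \prod_(j | j != i0) p j s (a j).
  by apply: eq_bigr => j /negbTE hj; rewrite /dev_profile hj.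
rewrite /pert /dev_profile eqxx /=.
by case: (s == s0); case: (val (a i0) == val b) => /=; ring.
Qed.

Lemma trans_pert p i0 (s0 : S) (b : 'I_(Ai i0)) t s s' :
  trans (pert p s0 b t) s s' = trans p s s' + t * ((s == s0)%:R * dev_trans p b s s').
Proof.
rewrite /trans /dev_trans; under eq_bigr do rewrite jprob_pert mulrDl.
rewrite big_split /= !mulr_sumr; congr (_ + _); apply: eq_bigr => a _; ring.
Qed.

Lemma exp_reward_pert r p i0 (s0 : S) (b : 'I_(Ai i0)) t s :
  exp_reward r (pert p s0 b t) s =
  exp_reward r p s + t * ((s == s0)%:R * \sum_a dev_prob p b s a * r s a).
Proof.
rewrite /exp_reward; under eq_bigr do rewrite jprob_pert mulrDl.
rewrite big_split /= !mulr_sumr; congr (_ + _); apply: eq_bigr => a _; ring.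
Qed.

Lemma trans_pert_row_le p (hp : is_policy p) i0 (s0 : S) (b : 'I_(Ai i0)) t s :
  \sum_s' `|trans (pert p s0 b t) s s'| <= (1 - zt) * (1 + `|t|).
Proof.
apply: (le_trans (sum_norm_mix_le _ _)); rewrite ler_wpM2l ?subr_ge0 ?zeta_le1 //.
rewrite -(sum_norm_jprob hp s) -(mulr1 `|t|) -(sum_norm_dev_prob hp b s) mulr_sumr.
rewrite -big_split /=; apply: ler_sum => a _; rewrite jprob_pert.
apply: (le_trans (ler_normD _ _)); rewrite lerD2l !normrM ler_wpM2l //.
by case: (s == s0); rewrite ?normr1 ?normr0 ?mul1r ?mul0r.
Qed.

Lemma sum_mul_indicator (F G : S -> R) s0 :
  \sum_s F s * ((s == s0)%:R * G s) = F s0 * G s0.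
Proof.
rewrite (bigD1 s0) //= eqxx mul1r big1 ?addr0 // => s /negbTE ->.
by rewrite mul0r mulr0.
Qed.

Hypothesis zeta_gt0 : 0 < zt.

Lemma zeta_rate : 0 <= 1 - zt < 1.
Proof. by rewrite subr_ge0 zeta_le1 ltrBlDr ltrDl. Qed.

Lemma pert_rate (t : R) : `|t| <= zt / 2 ->
  0 <= (1 - zt) * (1 + `|t|) < 1 /\ (1 - zt) * (1 + `|t|) <= 1 - zt / 2.
Proof.
move=> ht; have z1 := zeta_le1; have z0 := zeta_gt0; have t0 : 0 <= `|t| by [].
have le_half : (1 - zt) * `|t| <= zt / 2.
  by apply: (@le_trans _ _ (1 * `|t|)); [apply: ler_wpM2r; lra | lra].
have ge0 : 0 <= (1 - zt) * `|t| by rewrite mulr_ge0 ?subr_ge0.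
have -> : (1 - zt) * (1 + `|t|) = (1 - zt) + (1 - zt) * `|t| by ring.
split; [apply/andP; split|]; lra.
Qed.

Lemma geom_bounded_pert p (hp : is_policy p) i0 (s0 : S) (b : 'I_(Ai i0)) t x :
  `|t| <= zt / 2 -> geom_bounded (trans (pert p s0 b t)) x.
Proof.
by move=> /pert_rate [rate _]; exact: geom_bounded_row (trans_pert_row_le hp s0 b t) rate x.
Qed.

Variables (r : I -> S -> joint Ai -> R) (rho : S -> R) (i0 : I).

Definition visits p : S -> R := occupation (trans p) rho.

Definition state_value p : S -> R := occupation (ktr (trans p)) (exp_reward (r i0) p).

Definition action_value p s a : R := r i0 s a + \sum_s' P s a s' * state_value p s'.

Definition dev_value p s (b : 'I_(Ai i0)) : R := \sum_a dev_prob p b s a * action_value p s a.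

Lemma visits_fixpoint p (hp : is_policy p) s' :
  visits p s' = rho s' + \sum_s visits p s * trans p s s'.
Proof. exact: (occupation_fixpoint (geom_bounded_row (trans_row_le hp) zeta_rate _)). Qed.

Lemma state_value_fixpoint p (hp : is_policy p) s :
  state_value p s = exp_reward (r i0) p s + \sum_s' state_value p s' * trans p s s'.
Proof. exact: (occupation_fixpoint (geom_bounded_tr (trans_row_le hp) zeta_rate _)). Qed.

Section Perturbation.
Variables (p : profile R S Ai) (s0 : S) (b : 'I_(Ai i0)).
Hypothesis hp : is_policy p.

Local Notation visits_pert t := (occupation (trans (pert p s0 b t)) rho).

Lemma value_pert t : `|t| <= zt / 2 ->
  value (r i0) rho P (pert p s0 b t) =
  \sum_s rho s * state_value p s + t * (visits_pert t s0 * dev_value p s0 b).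
Proof.
move=> ht; have hg := geom_bounded_pert hp s0 b rho ht.
(* the reward of the perturbed profile splits into a telescoping term and the deviation *)
have reward_split s : exp_reward (r i0) (pert p s0 b t) s =
    (state_value p s - \sum_s' trans (pert p s0 b t) s s' * state_value p s') +
    t * ((s == s0)%:R * (\sum_a dev_prob p b s a * r i0 s a +
                         \sum_s' dev_trans p b s s' * state_value p s')).
  have -> : \sum_s' trans (pert p s0 b t) s s' * state_value p s' =
      \sum_s' state_value p s' * trans p s s' +
      t * ((s == s0)%:R * \sum_s' dev_trans p b s s' * state_value p s').
    under eq_bigr do rewrite trans_pert mulrDl.
    rewrite big_split /= !mulr_sumr; congr (_ + _); apply: eq_bigr => s' _; ring.
  rewrite exp_reward_pert [state_value p s]state_value_fixpoint //; ring.
rewrite value_occupation //; under eq_bigr do rewrite reward_split mulrDr.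
rewrite big_split /= occupation_telescope //.
under eq_bigr do rewrite mulrCA.
rewrite -mulr_sumr sum_mul_indicator; congr (_ + t * (_ * _)).
rewrite /dev_value /action_value /dev_trans.
under [RHS]eq_bigr do rewrite mulrDr.
rewrite big_split /=; congr (_ + _).
under eq_bigr do rewrite mulr_suml.
rewrite exchange_big /=; apply: eq_bigr => a _; rewrite mulr_sumr.
by apply: eq_bigr => s' _; rewrite mulrA.
Qed.

Lemma visits_pert_sub_le t : `|t| <= zt / 2 ->
  `|visits_pert t s0 - visits p s0| <= 2 * (\sum_s `|rho s|) / zt ^+ 2 * `|t|.
Proof.
move=> ht; have [_ rate_le] := pert_rate ht.
have z1 := zeta_le1; have z0 := zeta_gt0.
have fix_t := occupation_fixpoint (geom_bounded_pert hp s0 b rho ht).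
have visits_pert_l1 : (zt / 2) * \sum_s `|visits_pert t s| <= \sum_s `|rho s|.
  apply: le_trans _ (fixpoint_l1_le (trans_pert_row_le hp s0 b t) fix_t).
  by rewrite ler_wpM2r ?sumr_ge0 //; lra.
have diff_fix s' : visits_pert t s' - visits p s' =
    t * visits_pert t s0 * dev_trans p b s0 s' +
    \sum_s (visits_pert t s - visits p s) * trans p s s'.
  rewrite [visits_pert t s']fix_t [visits p s']visits_fixpoint //.
  under eq_bigr do rewrite trans_pert mulrDr mulrCA.
  rewrite big_split /= -mulr_sumr sum_mul_indicator.
  under [X in _ = _ + X]eq_bigr do rewrite mulrBl.
  rewrite sumrB; ring.
have := fixpoint_l1_le (trans_row_le hp) diff_fix; rewrite subKr => diff_l1.
have drive_l1 : \sum_s' `|t * visits_pert t s0 * dev_trans p b s0 s'| <=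
    `|t| * \sum_s `|visits_pert t s|.
  under eq_bigr do rewrite normrM.
  rewrite -mulr_sumr normrM -mulrA ler_wpM2l //.
  rewrite -[leRHS]mulr1 ler_pM ?sumr_ge0 ?norm_le_sum_norm //.
  by apply: le_trans (sum_norm_mix_le _ _) _; rewrite sum_norm_dev_prob // mulr1; lra.
have := norm_le_sum_norm (fun s => visits_pert t s - visits p s) s0.
move=> /le_trans; apply.
rewrite -(ler_pM2l zeta_gt0); apply: (le_trans diff_l1); apply: (le_trans drive_l1).
rewrite [leRHS](_ : _ = `|t| * (2 * (\sum_s `|rho s|) / zt)); last by field; rewrite gt_eqF.
by rewrite ler_wpM2l // ler_pdivlMr //; lra.
Qed.

Lemma grad_eq : grad r rho P p i0 s0 b = visits p s0 * dev_value p s0 b.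
Proof.
rewrite /grad /derive1; apply: cvg_lim => //; apply/subr_cvg0.
have hz2 : 0 < zt / 2 by rewrite divr_gt0.
have small0 : `|0 : R| <= zt / 2 by rewrite normr0 ltW.
pose K := 2 * (\sum_s `|rho s|) / zt ^+ 2 * `|dev_value p s0 b|.
apply: (@cvg_to_0_linear _ _ K (zt / 2)) => // h /andP[h0 hk].
rewrite addr0 (value_pert (ltW hk)) (value_pert small0).
rewrite mul0r addr0 addrAC subrr add0r.
rewrite -[h^-1 *: _]/(h^-1 * _) mulKf -?normr_gt0 // -mulrBl normrM mulrAC.
by rewrite ler_wpM2r // visits_pert_sub_le // ltW.
Qed.

End Perturbation.

Hypothesis r_bound : forall i s a, -1 <= r i s a <= 1.
Hypothesis rho_ge0 : forall s, 0 <= rho s.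
Hypothesis rho_sum1 : \sum_s rho s = 1.

Lemma norm_r_le1 s a : `|r i0 s a| <= 1.
Proof. by rewrite ler_norml; have /andP[-> ->] := r_bound i0 s a. Qed.

Lemma sum_norm_rho : \sum_s `|rho s| = 1.
Proof. by rewrite -rho_sum1; apply: eq_bigr => s _; rewrite ger0_norm. Qed.

Lemma visits_l1_le p : is_policy p -> zt * \sum_s `|visits p s| <= 1.
Proof.
move=> hp; have := fixpoint_l1_le (trans_row_le hp) (visits_fixpoint hp).
by rewrite subKr sum_norm_rho.
Qed.

Lemma state_value_le p : is_policy p -> forall s, zt * `|state_value p s| <= 1.
Proof.
move=> hp s; have := fixpoint_sup_le (trans_row_le hp) zeta_rate (state_value_fixpoint hp).
rewrite subKr; apply => s'.
apply: (le_trans (ler_norm_sum _ _ _)); rewrite -(sum_norm_jprob hp s').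
by apply: ler_sum => a _; rewrite normrM ler_piMr ?norm_r_le1.
Qed.

Lemma norm_sum_P_le (f : S -> R) s a B : 0 <= B -> (forall s', `|f s'| <= B) ->
  `|\sum_s' P s a s' * f s'| <= (1 - zt) * B.
Proof.
move=> B0 hf; apply: (le_trans (ler_norm_sum _ _ _)).
apply: (@le_trans _ _ (\sum_s' P s a s' * B)).
  by apply: ler_sum => s' _; rewrite normrM ger0_norm ?ler_wpM2l.
by rewrite -mulr_suml ler_wpM2r ?sum_P_le.
Qed.

Lemma action_value_le p : is_policy p -> forall s a, zt * `|action_value p s a| <= 1.
Proof.
move=> hp s a; have inv0 : 0 <= zt^-1 by rewrite invr_ge0 ltW.
have u_le s' : `|state_value p s'| <= zt^-1.
  by rewrite -(ler_pM2l zeta_gt0) mulfV ?gt_eqF ?state_value_le.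
have sum_P_u := norm_sum_P_le s a inv0 u_le.
apply: (@le_trans _ _ (zt * (1 + (1 - zt) * zt^-1))).
  apply: ler_wpM2l; first exact: ltW.
  apply: (le_trans (ler_normD _ _)).
  by apply: lerD; [exact: norm_r_le1 | exact: sum_P_u].
by rewrite [leLHS](_ : _ = 1) //; field; rewrite gt_eqF.
Qed.

Lemma dev_value_le p : is_policy p -> forall s b, zt * `|dev_value p s b| <= 1.
Proof.
move=> hp s b; apply: (@le_trans _ _ (zt * \sum_a `|dev_prob p b s a| * `|action_value p s a|)).
  apply: ler_wpM2l; first exact: ltW.
  apply: (le_trans (ler_norm_sum _ _ _)).
  by apply: ler_sum => a _; rewrite normrM.
rewrite mulr_sumr -(sum_norm_dev_prob hp b s); apply: ler_sum => a _.
by rewrite mulrCA ler_piMr ?action_value_le.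
Qed.

Definition policy_dist (p p' : profile R S Ai) (s : S) : R :=
  \sum_i \sum_c `|p i s c - p' i s c|.

Lemma jprob_dist_le p p' : is_policy p -> is_policy p' ->
  forall s, \sum_a `|jprob p s a - jprob p' s a| <= policy_dist p p' s.
Proof.
by move=> hp hp' s; apply: sum_norm_prod_sub_le => i; rewrite sum_norm_policy.
Qed.

Lemma dev_prob_dist_le p p' : is_policy p -> is_policy p' ->
  forall s (b : 'I_(Ai i0)),
  \sum_a `|dev_prob p b s a - dev_prob p' b s a| <= policy_dist p p' s.
Proof.
move=> hp hp' s b; apply: le_trans (sum_norm_prod_sub_le _ _) _.
- by move=> i; rewrite sum_norm_dev_profile.
- by move=> i; rewrite sum_norm_dev_profile.
apply: ler_sum => i _; rewrite /dev_profile; case: (i == i0) => //.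
by rewrite big1 ?sumr_ge0 // => c _; rewrite subrr normr0.
Qed.

Lemma trans_sub p p' s s' :
  trans p s s' - trans p' s s' = \sum_a (jprob p s a - jprob p' s a) * P s a s'.
Proof. by rewrite /trans -sumrB; apply: eq_bigr => a _; rewrite mulrBl. Qed.

Section Lipschitz.
Variables (p p' : profile R S Ai) (X : R).
Hypotheses (hp : is_policy p) (hp' : is_policy p').
Hypothesis dist_le : forall s, policy_dist p p' s <= X.

Lemma dist_bound_ge0 : 0 <= X.
Proof.
have [s _|S0] := pickP S.
  by apply: le_trans (dist_le s); apply: sumr_ge0 => i _; apply: sumr_ge0.
by move: rho_sum1; rewrite big_pred0 // => /eqP; rewrite eq_sym oner_eq0.
Qed.

Lemma trans_sub_row_le s :
  \sum_s' `|trans p s s' - trans p' s s'| <= (1 - zt) * X.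
Proof.
under eq_bigr do rewrite trans_sub.
apply: (le_trans (sum_norm_mix_le _ _)); apply: ler_wpM2l; first by rewrite subr_ge0 zeta_le1.
exact: le_trans (jprob_dist_le hp hp' s) (dist_le s).
Qed.

Lemma visits_sub_l1_le :
  zt * (zt * \sum_s `|visits p s - visits p' s|) <= (1 - zt) * X.
Proof.
have diff_fix s' : visits p s' - visits p' s' =
    \sum_s visits p s * (trans p s s' - trans p' s s') +
    \sum_s (visits p s - visits p' s) * trans p' s s'.
  by rewrite (fixpoint_sub (visits_fixpoint hp) (visits_fixpoint hp')) subrr add0r.
have := fixpoint_l1_le (trans_row_le hp') diff_fix; rewrite subKr => diff_l1.
have drive := kstep_l1_le (K := fun s s' => trans p s s' - trans p' s s')
  trans_sub_row_le (visits p).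
apply: (@le_trans _ _ (zt * ((1 - zt) * X * \sum_s `|visits p s|))).
  by apply: ler_wpM2l; [exact: ltW | exact: le_trans diff_l1 drive].
rewrite mulrCA -[leRHS]mulr1 ler_wpM2l ?visits_l1_le //.
by rewrite mulr_ge0 ?subr_ge0 ?zeta_le1 ?dist_bound_ge0.
Qed.

Lemma state_value_sub_le s : zt * (zt * `|state_value p s - state_value p' s|) <= X.
Proof.
have diff_fix s1 : state_value p s1 - state_value p' s1 =
    \sum_a (jprob p s1 a - jprob p' s1 a) * action_value p s1 a +
    \sum_s' (state_value p s' - state_value p' s') * trans p' s1 s'.
  have drive : \sum_a (jprob p s1 a - jprob p' s1 a) * action_value p s1 a =
      (exp_reward (r i0) p s1 - exp_reward (r i0) p' s1) +
      \sum_s' state_value p s' * (trans p s1 s' - trans p' s1 s').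
    under eq_bigr do rewrite mulrDr.
    rewrite big_split /= /exp_reward -sumrB; congr (_ + _).
      by apply: eq_bigr => a _; rewrite mulrBl.
    under [RHS]eq_bigr do rewrite trans_sub mulr_sumr.
    rewrite exchange_big /=; apply: eq_bigr => a _; rewrite mulr_sumr.
    by apply: eq_bigr => s' _; ring.
  by rewrite drive (fixpoint_sub (state_value_fixpoint hp) (state_value_fixpoint hp')).
have drive_le s1 : `|\sum_a (jprob p s1 a - jprob p' s1 a) * action_value p s1 a| <= X / zt.
  apply: (le_trans (ler_norm_sum _ _ _)).
  apply: (@le_trans _ _ (\sum_a `|jprob p s1 a - jprob p' s1 a| * zt^-1)).
    apply: ler_sum => a _; rewrite normrM; apply: ler_wpM2l => //.
    by rewrite -(ler_pM2l zeta_gt0) mulfV ?gt_eqF ?action_value_le.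
  rewrite -mulr_suml; apply: ler_wpM2r; first by rewrite invr_ge0 ltW.
  exact: le_trans (jprob_dist_le hp hp' s1) (dist_le s1).
have := fixpoint_sup_le (trans_row_le hp') zeta_rate diff_fix drive_le s.
rewrite subKr => u_le; apply: le_trans (ler_wpM2l (ltW zeta_gt0) u_le) _.
by rewrite [leLHS](_ : _ = X) ?lexx //; field; rewrite gt_eqF.
Qed.

Lemma action_value_sub_le s a :
  zt * (zt * `|action_value p s a - action_value p' s a|) <= (1 - zt) * X.
Proof.
have X0 := dist_bound_ge0; have zz : 0 < zt * zt by rewrite mulr_gt0.
have -> : action_value p s a - action_value p' s a =
    \sum_s' P s a s' * (state_value p s' - state_value p' s').
  rewrite /action_value opprD addrACA subrr add0r -sumrB.
  by apply: eq_bigr => s' _; rewrite mulrBr.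
have u_le s' : `|state_value p s' - state_value p' s'| <= X / (zt * zt).
  by rewrite ler_pdivlMr // mulrC -mulrA state_value_sub_le.
have := norm_sum_P_le s a (divr_ge0 X0 (ltW zz)) u_le.
move=> /(ler_wpM2l (ltW zz)); rewrite mulrA => /le_trans; apply.
by rewrite [leLHS](_ : _ = (1 - zt) * X) ?lexx //; field; rewrite gt_eqF.
Qed.

Lemma dev_value_sub_le s b : zt * (zt * `|dev_value p s b - dev_value p' s b|) <= X.
Proof.
have z0 := ltW zeta_gt0.
have split_sub : dev_value p s b - dev_value p' s b =
    \sum_a (dev_prob p b s a - dev_prob p' b s a) * action_value p s a +
    \sum_a dev_prob p' b s a * (action_value p s a - action_value p' s a).
  by rewrite /dev_value -sumrB -big_split /=; apply: eq_bigr => a _; ring.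
have prob_part :
    zt * \sum_a `|dev_prob p b s a - dev_prob p' b s a| * `|action_value p s a| <= X.
  apply: le_trans (le_trans (dev_prob_dist_le hp hp' s b) (dist_le s)).
  rewrite mulr_sumr; apply: ler_sum => a _.
  by rewrite mulrCA ler_piMr ?action_value_le.
have value_part :
    zt * (zt * \sum_a `|dev_prob p' b s a| * `|action_value p s a - action_value p' s a|)
    <= (1 - zt) * X.
  apply: (@le_trans _ _ (\sum_a `|dev_prob p' b s a| * ((1 - zt) * X))); last first.
    by rewrite -mulr_suml sum_norm_dev_prob // mul1r.
  rewrite !mulr_sumr; apply: ler_sum => a _.
  rewrite (_ : zt * (zt * _) = `|dev_prob p' b s a| *
    (zt * (zt * `|action_value p s a - action_value p' s a|))); last by ring.
  exact: ler_wpM2l (action_value_sub_le s a).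
rewrite split_sub; apply: (@le_trans _ _ (zt * (zt *
    (\sum_a `|dev_prob p b s a - dev_prob p' b s a| * `|action_value p s a| +
     \sum_a `|dev_prob p' b s a| * `|action_value p s a - action_value p' s a|)))).
  apply: ler_wpM2l => //; apply: ler_wpM2l => //.
  apply: (le_trans (ler_normD _ _)); apply: lerD;
    by apply: (le_trans (ler_norm_sum _ _ _)); apply: ler_sum => a _; rewrite normrM.
have := ler_wpM2l z0 prob_part; rewrite !mulrDr; lra.
Qed.

Definition grad_sub_weight s : R :=
  zt * zt * `|visits p s - visits p' s| + zt * `|visits p' s| * X.

Lemma grad_sub_weight_ge0 s : 0 <= grad_sub_weight s.
Proof.
have z0 := ltW zeta_gt0; have X0 := dist_bound_ge0.
by apply: addr_ge0; apply: mulr_ge0; rewrite ?mulr_ge0 ?normr_ge0.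
Qed.

Lemma grad_sub_le s b :
  zt ^+ 3 * `|grad r rho P p i0 s b - grad r rho P p' i0 s b| <= grad_sub_weight s.
Proof.
have z0 := ltW zeta_gt0; have X0 := dist_bound_ge0.
rewrite !grad_eq //.
have -> : visits p s * dev_value p s b - visits p' s * dev_value p' s b =
    (visits p s - visits p' s) * dev_value p s b +
    visits p' s * (dev_value p s b - dev_value p' s b) by ring.
apply: (@le_trans _ _ (zt ^+ 3 * (`|visits p s - visits p' s| * `|dev_value p s b| +
    `|visits p' s| * `|dev_value p s b - dev_value p' s b|))).
  by rewrite ler_wpM2l ?exprn_ge0 // -!normrM ler_normD.
rewrite mulrDr /grad_sub_weight; apply: lerD.
  rewrite (_ : _ * _ = zt * zt * `|visits p s - visits p' s| * (zt * `|dev_value p s b|));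
    last by rewrite !exprS expr0; ring.
  by rewrite ler_piMr ?mulr_ge0 ?dev_value_le.
rewrite (_ : _ * _ = zt * `|visits p' s| * (zt * (zt * `|dev_value p s b - dev_value p' s b|)));
  last by rewrite !exprS expr0; ring.
by rewrite ler_wpM2l ?mulr_ge0 ?dev_value_sub_le.
Qed.

Lemma sum_grad_sub_weight_le : \sum_s grad_sub_weight s <= 3 * X.
Proof.
have X0 := dist_bound_ge0; have z0 := ltW zeta_gt0.
rewrite big_split /= -mulr_sumr -mulr_suml -mulr_sumr.
have shrink : (1 - zt) * X <= X by rewrite ler_piMl ?subr_ge0 //; lra.
have := visits_sub_l1_le; have := ler_wpM2r X0 (visits_l1_le hp').
by rewrite mul1r mulrA; lra.
Qed.

Lemma grad_sub_sumsq_le :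
  \sum_s \sum_(b < Ai i0) (grad r rho P p i0 s b - grad r rho P p' i0 s b) ^+ 2
  <= (Ai i0)%:R * (3 / zt ^+ 3 * X) ^+ 2.
Proof.
have z3 : 0 < zt ^+ 3 by rewrite exprn_gt0.
rewrite -(ler_pM2l (exprn_gt0 2 z3)).
rewrite [leRHS](_ : _ = (Ai i0)%:R * (3 * X) ^+ 2); last by field; rewrite gt_eqF.
apply: (@le_trans _ _ (\sum_s \sum_(b < Ai i0) grad_sub_weight s ^+ 2)).
  rewrite mulr_sumr; apply: ler_sum => s _; rewrite mulr_sumr; apply: ler_sum => b _.
  rewrite -exprMn; apply: sqr_le_of_norm_le.
  by rewrite normrM ger0_norm ?grad_sub_le // ltW.
under eq_bigr do rewrite sumr_const card_ord -mulr_natl.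
rewrite -mulr_sumr ler_wpM2l //.
apply: le_trans (sumr_sqr_le_sqr_sumr grad_sub_weight_ge0) _.
apply: sqr_le_of_norm_le.
by rewrite ger0_norm ?sum_grad_sub_weight_le // sumr_ge0 // => s _; apply: grad_sub_weight_ge0.
Qed.

End Lipschitz.

End Game.

Section Norms.
Variables (R : realType) (I S : finType) (Ai : I -> nat).

Lemma sqr_enorm n (g : S -> 'I_n -> R) : enorm g ^+ 2 = \sum_s \sum_b g s b ^+ 2.
Proof.
by rewrite sqr_sqrtr // sumr_ge0 // => s _; rewrite sumr_ge0 // => b _; rewrite sqr_ge0.
Qed.

Lemma enorm_le_of_sumsq n (g : S -> 'I_n -> R) c : 0 <= c ->
  \sum_s \sum_b g s b ^+ 2 <= n%:R * c ^+ 2 -> enorm g <= Num.sqrt n%:R * c.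
Proof.
by move=> c0 hg; apply: sqrtr_le; rewrite ?mulr_ge0 ?sqrtr_ge0 // exprMn sqr_sqrtr.
Qed.

Lemma prof_norm_le_of_sumsq (g : profile R S Ai) c : 0 <= c ->
  (forall i, \sum_s \sum_b g i s b ^+ 2 <= (Ai i)%:R * c ^+ 2) ->
  prof_norm g <= Num.sqrt (\sum_i Ai i)%:R * c.
Proof.
move=> c0 hg; apply: sqrtr_le; rewrite ?mulr_ge0 ?sqrtr_ge0 // exprMn sqr_sqrtr //.
by rewrite natr_sum mulr_suml; apply: ler_sum => i _; apply: hg.
Qed.

Lemma policy_dist_le_enorm (f f' : profile R S Ai) s :
  policy_dist f f' s <= \sum_j Num.sqrt (Ai j)%:R * enorm (fun s b => f j s b - f' j s b).
Proof.
apply: ler_sum => j _; apply: le_trans (sum_norm_le_sqrt _) _.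
rewrite ler_wpM2l ?sqrtr_ge0 // ler_sqrt ?sumr_ge0 // => [|s' _]; last first.
  by rewrite sumr_ge0 // => b _; rewrite sqr_ge0.
rewrite (bigD1 s) //= lerDl sumr_ge0 // => s' _.
by rewrite sumr_ge0 // => b _; rewrite sqr_ge0.
Qed.

Lemma sum_sqrt_enorm_le (f : profile R S Ai) :
  \sum_j Num.sqrt (Ai j)%:R * enorm (f j) <= Num.sqrt (\sum_j Ai j)%:R * prof_norm f.
Proof.
rewrite /prof_norm -sqrtrM // -[leLHS]ger0_norm ?sumr_ge0 // => [|j _]; last first.
  by rewrite mulr_ge0 ?sqrtr_ge0.
rewrite -sqrtr_sqr ler_sqrt ?mulr_ge0 ?sumr_ge0 //; last first.
  by move=> i _; rewrite !sumr_ge0 // => s _; rewrite sumr_ge0 // => b _; rewrite sqr_ge0.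
apply: le_trans (cauchy_schwarz_sum _ _) _; rewrite natr_sum.
have -> : \sum_j Num.sqrt (Ai j)%:R ^+ 2 = \sum_j (Ai j)%:R :> R.
  by apply: eq_bigr => j _; rewrite sqr_sqrtr.
have -> : \sum_j enorm (f j) ^+ 2 = \sum_j \sum_s \sum_(b < Ai j) f j s b ^+ 2.
  by apply: eq_bigr => j _; apply: sqr_enorm.
exact: lexx.
Qed.

End Norms.

Theorem lemmaE8 (R : realType) (I S : finType) (Ai : I -> nat)
  (r : I -> S -> joint Ai -> R) (P : S -> joint Ai -> S -> R) (rho : S -> R)
  (hr : forall i s a, -1 <= r i s a <= 1)
  (hP : forall s a s', 0 <= P s a s')
  (hzeta : 0 < zeta P)
  (hrho0 : forall s, 0 <= rho s) (hrho1 : \sum_(s : S) rho s = 1)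
  (pi pi' : profile R S Ai) (hpi : is_policy pi) (hpi' : is_policy pi') :
  (forall i : I,
     enorm (fun s b => grad r rho P pi i s b - grad r rho P pi' i s b)
     <= 3 * Num.sqrt (Ai i)%:R / zeta P ^+ 3 *
        \sum_(j : I) Num.sqrt (Ai j)%:R * enorm (fun s b => pi j s b - pi' j s b))
  /\
  prof_norm (fun i s b => grad r rho P pi i s b - grad r rho P pi' i s b)
  <= 3 * (\sum_(i : I) Ai i)%:R / zeta P ^+ 3 *
     prof_norm (fun i s b => pi i s b - pi' i s b).
Proof.
set X := \sum_j _.
have sumsq_le i :=
  grad_sub_sumsq_le hP hzeta i hr hrho0 hrho1 hpi hpi' (policy_dist_le_enorm pi pi').
have k0 : 0 <= 3 / zeta P ^+ 3 by rewrite divr_ge0 ?exprn_ge0 ?ltW //; lra.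
have c0 : 0 <= 3 / zeta P ^+ 3 * X.
  by rewrite mulr_ge0 // sumr_ge0 // => j _; rewrite mulr_ge0 ?sqrtr_ge0.
split=> [i|].
  rewrite (_ : _ * X = Num.sqrt (Ai i)%:R * (3 / zeta P ^+ 3 * X)); last by ring.
  exact: enorm_le_of_sumsq c0 (sumsq_le i).
apply: le_trans (prof_norm_le_of_sumsq c0 sumsq_le) _.
set pn := prof_norm _; rewrite [leRHS](_ : _ =
  Num.sqrt (\sum_i Ai i)%:R * (3 / zeta P ^+ 3 * (Num.sqrt (\sum_i Ai i)%:R * pn))).
  apply: ler_wpM2l; first exact: sqrtr_ge0.
  apply: ler_wpM2l; first exact: k0.
  exact: (sum_sqrt_enorm_le (fun j s b => pi j s b - pi' j s b)).
by rewrite -[in LHS](sqr_sqrtr (ler0n R (\sum_i Ai i))); ring.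
Qed.
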